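(* Let $\mathbb{K}$ be a field of characteristic zero, let $V$ be an $n$-dimensional $\mathbb{K}$-vector space, and let $t,s\in\mathbb{K}\setminus\{0,1\}$ be arbitrary. Then the functions $\widehat{\phi}_{n,t}$ and $\widehat{\phi}_{n,s}$ on $\mathcal{L}(V)$ are equal.
   Context: $C^2(V;V)$ is the space of antisymmetric bilinear maps $V\times V\to V$. $\mathcal{L}(V)=\{\lambda\in C^2(V;V): (V,\lambda)\text{ is a Lie algebra}\}$, i.e. $\lambda$ satisfies the Jacobi identity $\lambda(X,\lambda(Y,Z))+\lambda(Y,\lambda(Z,X))+\lambda(Z,\lambda(X,Y))=0$. For $t\in\mathbb{K}$, $\mathcal{D}(t,1,0)(V,\lambda)$ is the space of linear maps $D:V\to V$ with $tD\lambda(X,Y)=\lambda(DX,Y)$ for all $X,Y$, and $\widehat{\phi}_{n,t}:\mathcal{L}(V)\to\{0,1,\dots,n^2\}$ is given by $\widehat{\phi}_{n,t}(\lambda)=\dim\mathcal{D}(t,1,0)(V,\lambda)$. *)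

From HB Require Import structures.
From mathcomp Require Import all_boot all_order all_algebra.
From mathcomp Require Import boolp.
Set Implicit Arguments. Unset Strict Implicit. Unset Printing Implicit Defensive.
Import GRing.Theory.
Local Open Scope ring_scope.

(* V = K^n realized as row vectors 'rV[K]_n; linear maps V -> V are matrices
   D : 'M[K]_n acting by X |-> X *m D. *)

Definition is_C2 (K : fieldType) (n : nat)
  (lam : 'rV[K]_n -> 'rV[K]_n -> 'rV[K]_n) : Prop :=
  (forall Y, linear (lam^~ Y)) /\ (forall X, linear (lam X)) /\
  (forall X Y, lam X Y = - lam Y X).

Definition is_Lie (K : fieldType) (n : nat)
  (lam : 'rV[K]_n -> 'rV[K]_n -> 'rV[K]_n) : Prop :=
  is_C2 lam /\
  (forall X Y Z, lam X (lam Y Z) + lam Y (lam Z X) + lam Z (lam X Y) = 0).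

Definition Dt10 (K : fieldType) (n : nat) (t : K)
  (lam : 'rV[K]_n -> 'rV[K]_n -> 'rV[K]_n) (D : 'M[K]_n) : Prop :=
  forall X Y, t *: (lam X Y *m D) = lam (X *m D) Y.

(* dimension of the linear subspace Dt10: the largest k <= n^2 such that
   Dt10 contains k linearly independent maps *)
Definition phi_hat (K : fieldType) (n : nat) (t : K)
  (lam : 'rV[K]_n -> 'rV[K]_n -> 'rV[K]_n) : nat :=
  (\max_(k < (n * n).+1 |
     `[< exists Ds : k.-tuple 'M[K]_n,
           free Ds /\ forall i : 'I_k, Dt10 t lam (tnth Ds i) >]) k)%N.

From HB Require Import structures.
From mathcomp Require Import all_boot all_order all_algebra.
From mathcomp Require Import boolp ring.
Import GRing.Theory.
Local Open Scope ring_scope.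

(* Let S = [V, V] and D be in D(t,1,0) with t <> 0, 1.  Comparing the Jacobi
   identity for (X, Y, Z) with the one for (DX, Y, Z) gives
   (t - t^2) D[X,[Y,Z]] = 0, so D kills [V, [V, V]], and then [DS, V] = 0.
   Hence if P is a projection onto S, the automorphism M = 1 + (t/s - 1) P,
   which only rescales S, makes D o M a member of D(s,1,0); D |-> D o M is a
   linear bijection from D(t,1,0) onto D(s,1,0). *)

Section LinearFun.

Context {R : pzRingType} {U V : lmodType R} {f : U -> V}.
Hypothesis f_lin : linear f.

Let fL : {linear U -> V} := HB.pack f (GRing.isLinear.Build R U V *:%R f f_lin).

Lemma linear_funD : {morph f : u v / u + v}.
Proof. exact: (raddfD fL). Qed.

Lemma linear_funZ a : {morph f : u / a *: u}.
Proof. exact: (linearZZ fL). Qed.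

Lemma linear_fun_sum (I : finType) (F : I -> U) :
  f (\sum_i F i) = \sum_i f (F i).
Proof. exact: (raddf_sum fL). Qed.

End LinearFun.

Lemma free_map_inj (K : fieldType) (vT wT : vectType K) (f : {linear vT -> wT})
    k (X : k.-tuple vT) :
  injective f -> free X -> free (map_tuple f X).
Proof.
move=> f_inj /freeP freeX; apply/freeP => c sum_fX0; apply: freeX.
apply: f_inj; rewrite linear0 linear_sum -[RHS]sum_fX0.
by apply: eq_bigr => i _; rewrite linearZ /= (nth_map 0) ?size_tuple.
Qed.

Section Bracket.

Context {K : fieldType} {n : nat}.
Variable lam : 'rV[K]_n -> 'rV[K]_n -> 'rV[K]_n.
Hypothesis lam_linl : forall Y, linear (lam^~ Y).
Hypothesis lam_linr : forall X, linear (lam X).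
Hypothesis lam_anti : forall X Y, lam X Y = - lam Y X.
Hypothesis lam_jacobi :
  forall X Y Z, lam X (lam Y Z) + lam Y (lam Z X) + lam Z (lam X Y) = 0.

Definition derived_mx : 'M[K]_n :=
  (\sum_(p : 'I_n * 'I_n) <<lam 'e_p.1 'e_p.2>>)%MS.

Definition derived_proj : 'M[K]_n := proj_mx derived_mx derived_mx^C%MS.

Definition derived_scale (c : K) : 'M[K]_n := 1%:M + (c - 1) *: derived_proj.

Lemma bracket_sub_derived X Y : (lam X Y <= derived_mx)%MS.
Proof.
rewrite (row_sum_delta X) (linear_fun_sum (lam_linl Y)).
apply: summx_sub => i _.
rewrite (linear_funZ (lam_linl Y)); apply: scalemx_sub.
rewrite (row_sum_delta Y) (linear_fun_sum (lam_linr _)).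
apply: summx_sub => j _.
rewrite (linear_funZ (lam_linr _)); apply: scalemx_sub.
by apply: (sumsmx_sup (i, j)) => //; rewrite genmxE.
Qed.

Lemma derived_proj_sub m (W : 'M_(m, n)) :
  (W *m derived_proj <= derived_mx)%MS.
Proof. exact: proj_mx_sub. Qed.

Lemma derived_proj_id m (W : 'M_(m, n)) :
  (W <= derived_mx)%MS -> W *m derived_proj = W.
Proof. by move=> sWS; rewrite proj_mx_id // capmx_compl. Qed.

Lemma derived_scale1 : derived_scale 1 = 1%:M.
Proof. by rewrite /derived_scale subrr scale0r addr0. Qed.

Lemma derived_scaleM c d :
  derived_scale c *m derived_scale d = derived_scale (c * d).
Proof.
have PP : derived_proj *m derived_proj = derived_proj.
  by apply: derived_proj_id; rewrite -[derived_proj]mul1mx derived_proj_sub.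
rewrite /derived_scale mulmxDl !mulmxDr !mulmx1 mul1mx -scalemxAr.
rewrite -scalemxAl PP scalerA -addrA -!scalerDl.
by congr (_ + _ *: _); ring.
Qed.

Lemma bracket_derived_scale c X Y : lam X Y *m derived_scale c = c *: lam X Y.
Proof.
rewrite /derived_scale mulmxDr mulmx1 -scalemxAr.
rewrite derived_proj_id ?bracket_sub_derived //.
by rewrite -{1}[lam X Y]scale1r -scalerDl addrC subrK.
Qed.

Variables (t : K) (D : 'M[K]_n).
Hypothesis DtD : Dt10 t lam D.

Lemma Dt10_bracketr X Y : lam X (Y *m D) = t *: (lam X Y *m D).
Proof. by rewrite lam_anti -DtD [lam Y X]lam_anti mulNmx scalerN opprK. Qed.

Hypotheses (t_neq0 : t != 0) (t_neq1 : t != 1).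

Lemma Dt10_bracket2 X Y Z : lam X (lam Y Z) *m D = 0.
Proof.
set a := lam X (lam Y Z) *m D.
have jacobiD : a + lam Y (lam Z X) *m D + lam Z (lam X Y) *m D = 0.
  by rewrite -!mulmxDl lam_jacobi mul0mx.
have := lam_jacobi (X *m D) Y Z.
rewrite -DtD Dt10_bracketr -DtD !(linear_funZ (lam_linr _)) !Dt10_bracketr.
rewrite !scalerA -addrA -scalerDr.
have -> : lam Y (lam Z X) *m D + lam Z (lam X Y) *m D = - a.
  by apply/eqP; rewrite -addr_eq0 addrC addrA jacobiD.
rewrite scalerN -scalerBl => /eqP; rewrite scaler_eq0 => /orP[|/eqP//].
have -> : t - t * t = t * (1 - t) by ring.
by rewrite mulf_eq0 (negbTE t_neq0) subr_eq0 eq_sym (negbTE t_neq1).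
Qed.

Lemma Dt10_derived_bracketl u Y : (u <= derived_mx)%MS -> lam (u *m D) Y = 0.
Proof.
have DS0 A B : lam (lam A B *m D) Y = 0.
  by rewrite -DtD lam_anti mulNmx Dt10_bracket2 oppr0 scaler0.
case/sub_sumsmxP => u_ ->; rewrite mulmx_suml (linear_fun_sum (lam_linl Y)).
apply: big1 => p _.
have /submxP[w ->] : (u_ p *m <<lam 'e_p.1 'e_p.2>> <= lam 'e_p.1 'e_p.2)%MS.
  by rewrite -(genmxE (lam 'e_p.1 'e_p.2)) submxMl.
rewrite (mx11_scalar w) mul_scalar_mx -scalemxAl (linear_funZ (lam_linl Y)).
by rewrite DS0 scaler0.
Qed.

Lemma Dt10_derived_scale s : s != 0 -> Dt10 s lam (derived_scale (t / s) *m D).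
Proof.
move=> s_neq0 X Y.
rewrite mulmxA bracket_derived_scale -scalemxAl scalerA mulrC divfK // DtD.
rewrite mulmxA {1}/derived_scale mulmxDr mulmx1 -scalemxAr mulmxDl.
rewrite (linear_funD (lam_linl Y) (X *m D)) -scalemxAl.
rewrite (linear_funZ (lam_linl Y)).
by rewrite (Dt10_derived_bracketl (X *m _)) ?derived_proj_sub // scaler0 addr0.
Qed.

End Bracket.

Lemma Dt10_free_transfer (K : fieldType) (n : nat)
    (lam : 'rV[K]_n -> 'rV[K]_n -> 'rV[K]_n) (t s : K) k :
  is_Lie lam -> t != 0 -> t != 1 -> s != 0 ->
  (exists Ds : k.-tuple 'M[K]_n, free Ds /\ forall i, Dt10 t lam (tnth Ds i)) ->
  (exists Ds : k.-tuple 'M[K]_n, free Ds /\ forall i, Dt10 s lam (tnth Ds i)).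
Proof.
move=> [[linl [linr anti]] jacobi] t_neq0 t_neq1 s_neq0 [Ds [freeDs DtDs]].
exists (map_tuple (mulmx (derived_scale lam (t / s))) Ds); split=> [|i].
  apply: free_map_inj freeDs.
  apply: (can_inj (g := mulmx (derived_scale lam (s / t)))) => B.
  rewrite mulmxA derived_scaleM mulrA divfK // divff //.
  by rewrite derived_scale1 mul1mx.
by rewrite tnth_map; apply: Dt10_derived_scale.
Qed.

Theorem theorem3p7 (K : fieldType) (n : nat) (hK : [pchar K] =i pred0)
  (t s : K) (ht0 : t != 0) (ht1 : t != 1) (hs0 : s != 0) (hs1 : s != 1) :
  forall lam : 'rV[K]_n -> 'rV[K]_n -> 'rV[K]_n,
    is_Lie lam -> phi_hat t lam = phi_hat s lam.
Proof.
move=> lam lamL; apply: eq_bigl => k.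
by apply: asbool_equiv_eq; split; apply: Dt10_free_transfer.
Qed.
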